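(* Let $p\ge 2$ and let $(E_n)$ be a sequence of convex and compact subsets of $\mathbb{R}^p$. Assume that $F_n:=\partial E_n$ converges in the Painlevé–Kuratowski sense to a compact nonempty set $F$. Then $E_n$ converges in the Painlevé–Kuratowski sense to $E:=\mathrm{conv}\,F$, and $\partial E=F$.
   Context: For subsets $A_n$ of $\mathbb{R}^p$, $\liminf A_n$ is the set of limits of sequences $x_n\in A_n$, $\limsup A_n$ is the set of limits of sequences $x_{n_k}\in A_{n_k}$ along some $n_1<n_2<\dots$, and $A_n\to A$ in the Painlevé–Kuratowski sense if $\liminf A_n=\limsup A_n=A$. $\partial$ denotes the topological boundary in $\mathbb{R}^p$ and $\mathrm{conv}$ the convex hull. *)

From HB Require Import structures.
From mathcomp Require Import all_boot all_order all_algebra.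
From mathcomp Require Import all_classical all_reals all_analysis.
Set Implicit Arguments. Unset Strict Implicit. Unset Printing Implicit Defensive.
Import Order.TTheory GRing.Theory Num.Theory.
Import numFieldNormedType.Exports.
Local Open Scope classical_set_scope.
Local Open Scope ring_scope.


Definition is_convex (R : realType) (p : nat) (A : set 'rV[R]_p) : Prop :=
  forall x y (t : R), A x -> A y -> 0 <= t -> t <= 1 ->
    A (t *: x + (1 - t) *: y).

Definition conv_hull (R : realType) (p : nat) (A : set 'rV[R]_p) : set 'rV[R]_p :=
  [set x | forall C : set 'rV[R]_p, is_convex C -> A `<=` C -> C x].

Definition boundary (R : realType) (p : nat) (A : set 'rV[R]_p) : set 'rV[R]_p :=
  closure A `\` interior A.

Definition PK_liminf (R : realType) (p : nat) (A : nat -> set 'rV[R]_p)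
  : set 'rV[R]_p :=
  [set x | exists u : nat -> 'rV[R]_p,
     (forall n, A n (u n)) /\ (u @ \oo --> x)].

Definition PK_limsup (R : realType) (p : nat) (A : nat -> set 'rV[R]_p)
  : set 'rV[R]_p :=
  [set x | exists (phi : nat -> nat) (u : nat -> 'rV[R]_p),
     (forall k, (phi k < phi k.+1)%N) /\
     (forall k, A (phi k) (u k)) /\ (u @ \oo --> x)].

Definition PK_converges (R : realType) (p : nat) (A : nat -> set 'rV[R]_p)
  (L : set 'rV[R]_p) : Prop :=
  PK_liminf A = L /\ PK_limsup A = L.

From HB Require Import structures.
From mathcomp Require Import all_boot all_order all_algebra.
From mathcomp Require Import all_classical all_reals all_analysis.
From mathcomp Require Import ring lra.
Import Order.TTheory GRing.Theory Num.Theory.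
Import numFieldNormedType.Exports.
Local Open Scope classical_set_scope.
Local Open Scope ring_scope.

(* Since the boundaries lie in the convex sets [E n], the convex set
   [liminf E n] contains [liminf (boundary (E n)) = F], hence [conv_hull F].
   For [p >= 2] the (sup-norm) spheres are connected, so far points of [E n]
   would force [boundary (E n)] to meet a fixed annulus beyond [F] infinitely
   often, giving a point of [limsup (boundary (E n)) = F] outside [F]: the [E n]
   are eventually bounded.  Then two opposite rays from [x \in limsup E n]
   leave [E n] through its boundary at bounded distance, so [x] lies between
   two points of [F].  A point of the boundary of [conv_hull F]
   is a limit of boundary points of [E n] on segments leaving [E n], hence lies
   in [F]; conversely, a point of [F] interior to [conv_hull F = liminf E n]
   is impossible: a supporting hyperplane of [E n] at a boundary point nearby
   cuts off a vertex of a small cube around it. *)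

Lemma ltr_div_succ_mul {R : realFieldType} (e y : R) :
  0 < e -> 0 <= y -> e / (y + 1) * y < e.
Proof. by move=> e0 y0; rewrite mulrAC ltr_pdivrMr ?ltr_wpDl // ltr_pM2l // ltrDl. Qed.

Section NormedModule.
Context {R : realType} {V : normedModType R}.
Implicit Types (K : set V) (a b x y : V).

Lemma ball_normP x y (e : R) : ball x e y <-> `|x - y| < e.
Proof. by rewrite -ball_normE. Qed.

Lemma interior_normP K x :
  interior K x <-> exists2 e, 0 < e & forall y, `|x - y| < e -> K y.
Proof.
rewrite /interior /= nbhs_ballP.
by split=> -[e e0 H]; exists e => // y /ball_normP; apply: H.
Qed.

Lemma closure_normP K x :
  closure K x <-> forall e, 0 < e -> exists2 y, K y & `|x - y| < e.
Proof.
split=> [Kx e e0 | H B /nbhs_ballP [e e0 eB]].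
  by have [y [Ky /ball_normP xy]] := Kx _ (nbhsx_ballx x e e0); exists y.
by have [y Ky xy] := H e e0; exists y; split => //; apply/eB/ball_normP.
Qed.

Lemma not_interior_near_compl {K x} {e : R} :
  ~ interior K x -> 0 < e -> exists2 w, `|x - w| < e & ~ K w.
Proof.
move=> nIx e0; apply: contrapT => H; apply/nIx/interior_normP.
by exists e => // y xy; apply: contrapT => nKy; apply: H; exists y.
Qed.

Lemma segment_diff a b (s t : R) :
  (a + t *: (b - a)) - (a + s *: (b - a)) = (t - s) *: (b - a).
Proof. by rewrite opprD addrACA subrr add0r scalerBl. Qed.

(* The supremum of the parameters of the segment lying in [K] gives the point. *)
Lemma segment_meets_boundary {K a b} : closed K -> K a -> ~ K b ->
  exists2 t, 0 <= t <= 1 &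
    K (a + t *: (b - a)) /\ ~ interior K (a + t *: (b - a)).
Proof.
move=> cK Ka nKb; pose P t := a + t *: (b - a).
pose T := [set t : R | 0 <= t <= 1 /\ K (P t)].
have T0 : T 0 by split; [rewrite lexx ler01 | rewrite /P scale0r addr0].
have supT : has_sup T by split; [exists 0 | exists 1 => t [/andP[]]].
set s := sup T.
have s0 : 0 <= s by exact: sup_upper_bound.
have s1 : s <= 1 by apply: ge_sup; [exists 0 | move=> t [/andP[]]].
have ba0 : 0 < `|b - a| + 1 by rewrite ltr_wpDl.
have KPs : K (P s).
  apply/cK/closure_normP => e e0.
  have c0 : 0 < e / (`|b - a| + 1) by rewrite divr_gt0.
  have [t [t01 KPt] st] := sup_adherent c0 supT.
  have /andP[t0 t1] := t01.
  have ts : t <= s by exact: sup_upper_bound.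
  exists (P t) => //; rewrite /P segment_diff normrZ ger0_norm ?subr_ge0 //.
  apply: le_lt_trans (ltr_div_succ_mul _ _ e0 (normr_ge0 _)).
  by apply: ler_wpM2r => //; rewrite -/s in st; lra.
have s1' : s < 1.
  rewrite lt_neqAle s1 andbT; apply/eqP => s_eq1; apply: nKb.
  by move: KPs; rewrite /P s_eq1 scale1r addrC subrK.
exists s; first by rewrite s0 s1.
split=> // /interior_normP [e e0 He].
pose h := Num.min (1 - s) (e / (`|b - a| + 1) / 2).
have h0 : 0 < h by rewrite lt_min subr_gt0 s1' !divr_gt0.
have : T (s + h).
  split; first by apply/andP; split; [lra | rewrite -lerBrDl ge_min lexx].
  apply: He; rewrite distrC /P segment_diff addrAC subrr add0r normrZ gtr0_norm //.
  apply: le_lt_trans (ltr_div_succ_mul _ _ e0 (normr_ge0 _)).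
  apply: ler_wpM2r => //; rewrite ge_min; apply/orP; right.
  by rewrite ler_pdivrMr // ler_peMr // ?ler1n // divr_ge0 // ltW.
by move=> /(sup_upper_bound supT); rewrite -/s; lra.
Qed.

Lemma normr_segment_le {a b} {t r : R} : 0 <= t <= 1 ->
  `|a| <= r -> `|b| <= r -> `|a + t *: (b - a)| <= r.
Proof.
move=> /andP[t0 t1] ar br.
have -> : a + t *: (b - a) = (1 - t) *: a + t *: b.
  by rewrite scalerBr scalerBl scale1r addrCA addrC.
apply: le_trans (ler_normD _ _) _; rewrite !normrZ ger0_norm ?subr_ge0 // ger0_norm //.
have -> : r = (1 - t) * r + t * r by ring.
by apply: lerD; apply: ler_wpM2l; rewrite ?subr_ge0.
Qed.

Lemma compact_normed_closed {K} : compact K -> closed K.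
Proof. by move=> cK; apply: compact_closed; [exact: norm_hausdorff | exact: cK]. Qed.

End NormedModule.

Section RowVectors.
Context {R : realType} {p : nat}.
Implicit Types (K : set 'rV[R]_p) (c d w x y z : 'rV[R]_p).

Lemma entry_le_normr x i : `|x ord0 i| <= `|x|.
Proof.
rewrite [leRHS]/Num.Def.normr /= mx_normrE; apply/bigmax_geP; right.
by exists (ord0, i).
Qed.

Lemma normr_le_entries x (c : R) :
  0 <= c -> (forall i, `|x ord0 i| <= c) -> `|x| <= c.
Proof.
move=> c0 xc; rewrite [leLHS]/Num.Def.normr /= mx_normrE.
by apply: bigmax_le => //= -[i j] _; rewrite (ord1 i).
Qed.

Lemma normr_attained {x} : x != 0 -> exists i, `|x| = `|x ord0 i|.
Proof.
rewrite -normr_eq0 => /mx_norm_neq0 [[i j] xij].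
by exists j; rewrite (ord1 i) in xij.
Qed.

Lemma boundary_closedP {K x} : closed K -> boundary K x <-> K x /\ ~ interior K x.
Proof. by move=> cK; rewrite /boundary -(proj1 (closure_id K) cK). Qed.

Lemma compact_annulus (r1 r2 : R) : compact [set x : 'rV[R]_p | r1 <= `|x| <= r2].
Proof.
apply: bounded_closed_compact.
  exists r2; split; first exact: num_real.
  by move=> r r2r x /andP[_ xr2]; apply: le_trans xr2 (ltW r2r).
move=> x /closure_normP clx; apply/andP; split; apply/ler_addgt0Pr => e e0;
  have [y /andP[r1y yr2] xy] := clx e e0.
- by have := lerB_dist y x; rewrite distrC; lra.
- by have := lerB_dist x y; lra.
Qed.

Lemma normr_segment_face c (c' : 'rV[R]_p) (t rho : R) k : 0 <= t <= 1 ->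
  `|c| <= rho -> `|c'| <= rho -> c ord0 k = c' ord0 k -> `|c ord0 k| = rho ->
  `|c + t *: (c' - c)| = rho.
Proof.
move=> t01 crho c'rho ck ckrho; apply/eqP; rewrite eq_le normr_segment_le //=.
rewrite -{1}ckrho; apply: le_trans (entry_le_normr _ k).
by rewrite !mxE ck subrr mulr0 addr0 -ck.
Qed.

Definition dotv x y : R := \sum_i x ord0 i * y ord0 i.

Definition l1_norm x : R := \sum_i `|x ord0 i|.

Definition sign_vertex (s : {ffun 'I_p -> bool}) : 'rV[R]_p :=
  \row_i (if s i then 1 else -1).

Definition sgnv x : 'rV[R]_p := sign_vertex [ffun i => 0 <= x ord0 i].

Lemma dotvDr d x y : dotv d (x + y) = dotv d x + dotv d y.
Proof. by rewrite /dotv -big_split; apply: eq_bigr => i _; rewrite mxE mulrDr. Qed.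

Lemma dotvZr d x (c : R) : dotv d (c *: x) = c * dotv d x.
Proof. by rewrite /dotv mulr_sumr; apply: eq_bigr => i _; rewrite mxE mulrCA. Qed.

Lemma dotvNr d x : dotv d (- x) = - dotv d x.
Proof. by rewrite /dotv -sumrN; apply: eq_bigr => i _; rewrite mxE mulrN. Qed.

Lemma dotv_ge0 x : 0 <= dotv x x.
Proof. by apply: sumr_ge0 => i _; rewrite -expr2 sqr_ge0. Qed.

Lemma entry_sqr_le_dotv x i : x ord0 i ^+ 2 <= dotv x x.
Proof.
rewrite /dotv (bigD1 i) //= -expr2 lerDl.
by apply: sumr_ge0 => j _; rewrite -expr2 sqr_ge0.
Qed.

Lemma dotv_le_normr x : dotv x x <= p%:R * `|x| ^+ 2.
Proof.
apply: (@le_trans _ _ (\sum_(i < p) `|x| ^+ 2)); last first.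
  by rewrite sumr_const card_ord mulr_natl.
apply: ler_sum => i _; rewrite -expr2 -real_normK ?num_real //.
by rewrite lerXn2r ?nnegrE ?normr_ge0 ?entry_le_normr.
Qed.

Lemma dotv_sgnv x : dotv x (sgnv x) = l1_norm x.
Proof.
apply: eq_bigr => i _; rewrite !mxE ffunE.
case: ifP => x0; first by rewrite mulr1 ger0_norm.
by rewrite mulrN1 ltr0_norm // ltNge x0.
Qed.

Lemma normr_sign_vertex_entry s i : `|sign_vertex s ord0 i| = 1 :> R.
Proof. by rewrite mxE; case: ifP; rewrite ?normrN normr1. Qed.

Lemma normr_sign_vertex_le s : `|sign_vertex s| <= 1 :> R.
Proof. by apply: normr_le_entries => // i; rewrite normr_sign_vertex_entry. Qed.

Lemma dotv_le_l1_norm d x : dotv d x <= l1_norm d * `|x|.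
Proof.
rewrite /dotv /l1_norm mulr_suml; apply: ler_sum => i _.
apply: le_trans (ler_norm _) _; rewrite normrM.
by apply: ler_wpM2l => //; apply: entry_le_normr.
Qed.

Lemma l1_norm_gt0 x : x != 0 -> 0 < l1_norm x.
Proof.
move=> x0; have [i xi] := normr_attained x0.
apply: (@lt_le_trans _ _ `|x ord0 i|); first by rewrite -xi normr_gt0.
by rewrite /l1_norm (bigD1 i) //= lerDl sumr_ge0.
Qed.

Lemma dotv_subZ x y (t : R) :
  dotv (x - t *: y) (x - t *: y) = dotv x x - 2 * t * dotv x y + t ^+ 2 * dotv y y.
Proof.
rewrite /dotv mulr_sumr [t ^+ 2 * _]mulr_sumr -sumrB -big_split /=.
by apply: eq_bigr => i _; rewrite !mxE; ring.
Qed.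

Lemma continuous_dotv_dist w : continuous (fun z => dotv (w - z) (w - z)).
Proof.
apply: continuous_big => //; first exact: add_continuous.
move=> i _ z.
have wz_i : (fun z : 'rV[R]_p => w ord0 i - z ord0 i) @ z --> w ord0 i - z ord0 i.
  exact: cvgB (cvg_cst _) (@coord_continuous R 1 p ord0 i z).
under eq_fun do rewrite !mxE.
exact: (cvgM wz_i wz_i).
Qed.

End RowVectors.

Section OuterNormals.
Context {R : realType} {p : nat}.
Implicit Types (K : set 'rV[R]_p) (a c d o q u w y z : 'rV[R]_p).

Definition outer_normal K q d := d != 0 /\ forall z, K z -> dotv d (z - q) <= 0.

Section NearestPoint.
Context {K : set 'rV[R]_p} {w q : 'rV[R]_p}.
Hypotheses (Kq : K q)
  (q_nearest : forall z, K z -> dotv (w - q) (w - q) <= dotv (w - z) (w - z)).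

(* Otherwise a small step from [q] towards [z] would get closer to [w]. *)
Lemma nearest_point_normal {z} : is_convex K -> K z -> dotv (w - q) (z - q) <= 0.
Proof.
move=> convK Kz; rewrite leNgt; apply/negP => a0.
set a := dotv (w - q) (z - q) in a0; set b := dotv (z - q) (z - q).
have b0 : 0 <= b by exact: dotv_ge0.
have ba0 : 0 < b + a by rewrite ltr_wpDl.
set t := a / (b + a).
have t0 : 0 < t by rewrite divr_gt0.
have t1 : t <= 1 by rewrite ler_pdivrMr // mul1r lerDr.
have tb : t * b <= a by rewrite /t mulrAC ler_pdivrMr // ler_pM2l // lerDl ltW.
have := q_nearest _ (convK _ _ _ Kz Kq (ltW t0) t1).
have -> : w - (t *: z + (1 - t) *: q) = (w - q) - t *: (z - q).
  by apply/matrixP => i j; rewrite !mxE; ring.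
rewrite dotv_subZ -/a -/b.
have : 0 < t * (2 * a - t * b) by rewrite mulr_gt0 //; lra.
by rewrite -subr_gt0; lra.
Qed.

Lemma nearest_point_dist {y} : K y -> `|q - w| <= p%:R * `|w - y|.
Proof.
move=> Ky; apply: normr_le_entries => [|i]; first by rewrite mulr_ge0.
have p1 : (1 <= p)%N by apply: leq_trans (ltn_ord i).
rewrite -ler_sqr ?nnegrE ?mulr_ge0 // real_normK ?num_real //.
have -> : (q - w) ord0 i ^+ 2 = (w - q) ord0 i ^+ 2 by rewrite !mxE; ring.
apply: le_trans (entry_sqr_le_dotv _ i) _; apply: le_trans (q_nearest _ Ky) _.
apply: le_trans (dotv_le_normr _) _; rewrite exprMn ler_wpM2r ?exprn_ge0 //.
by rewrite expr2 ler_peMr ?ler0n // ler1n.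
Qed.

End NearestPoint.

Lemma exists_outer_normal_near {K u} {e : R} : is_convex K -> compact K ->
  boundary K u -> 0 < e -> exists q d, [/\ K q, outer_normal K q d & `|q - u| < e].
Proof.
move=> convK cK Ku e0.
have [uK nIu] := (boundary_closedP (compact_normed_closed cK)).1 Ku.
have del0 : 0 < e / p.+1%:R by rewrite divr_gt0.
have [w uw nKw] := not_interior_near_compl nIu del0.
have dist_cont : {within K, continuous (fun z => dotv (w - z) (w - z))}.
  by apply: continuous_subspaceT => z; exact: continuous_dotv_dist.
have [q /set_mem Kq q_min] := compact_EVT_min (ex_intro _ u uK) cK dist_cont.
have {}q_min z : K z -> dotv (w - q) (w - q) <= dotv (w - z) (w - z).
  by move=> Kz; apply: q_min; exact: mem_set.
exists q, (w - q); split => //.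
  split=> [|z Kz]; last exact: (nearest_point_normal Kq q_min convK Kz).
  by rewrite subr_eq0; apply/eqP => wq; apply: nKw; rewrite wq.
apply: le_lt_trans (ler_distD w _ _) _.
have := nearest_point_dist q_min uK.
move: uw; rewrite (distrC u) ltr_pdivlMr ?ltr0n // mulrC -natr1 mulrDl mul1r.
lra.
Qed.

Lemma face_segment_meets_boundary K q c (c' : 'rV[R]_p) (rho : R) k : closed K ->
  `|c| <= rho -> `|c'| <= rho -> c ord0 k = c' ord0 k -> `|c ord0 k| = rho ->
  K (q + c) -> ~ K (q + c') -> exists2 b, boundary K b & `|b - q| = rho.
Proof.
move=> cK crho c'rho ck ckrho Kc nKc'.
have [t t01 [Kb nIb]] := segment_meets_boundary cK Kc nKc'.
exists (q + c + t *: (q + c' - (q + c))); first exact/boundary_closedP.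
have -> : q + c + t *: (q + c' - (q + c)) - q = c + t *: (c' - c).
  by apply/matrixP => i j; rewrite !mxE; ring.
exact: (normr_segment_face c c' t rho k).
Qed.

(* The sup-norm sphere of radius [rho] around [q] is connected when [p >= 2]:
   [q + a] and the cube vertex [q + o] are joined through two faces. *)
Lemma sphere_meets_boundary K q a o (rho : R) : (2 <= p)%N -> closed K ->
  0 < rho -> `|a| = rho -> (forall k, `|o ord0 k| = rho) ->
  K (q + a) -> ~ K (q + o) -> exists2 b, boundary K b & `|b - q| = rho.
Proof.
move=> p2 cK rho0 arho orho Ka nKo.
have [i ai] : exists i, `|a| = `|a ord0 i|.
  by apply: normr_attained; rewrite -normr_gt0 arho.
have [j ji] : exists j : 'I_p, j != i.
  have p0 : (0 < p)%N by apply: ltnW.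
  have [->|] := eqVneq i (Ordinal p0); first by exists (Ordinal p2).
  by exists (Ordinal p0); rewrite eq_sym.
have o_le : `|o| <= rho.
  by apply: normr_le_entries => [|k]; [exact: ltW | rewrite orho].
pose a' : 'rV[R]_p := \row_k (if k == i then a ord0 i else o ord0 k).
have a'_le : `|a'| <= rho.
  apply: normr_le_entries => [|k]; first exact: ltW.
  by rewrite mxE; case: eqP => _; rewrite ?orho // -arho entry_le_normr.
have [Ka'|nKa'] := pselect (K (q + a')).
  apply: (@face_segment_meets_boundary K q a' o rho j) => //;
    by rewrite mxE (negbTE ji) ?orho.
apply: (@face_segment_meets_boundary K q a a' rho i) => //.
- by rewrite arho.
- by rewrite mxE eqxx.
- by rewrite -ai.
Qed.

Lemma outer_normal_sphere_boundary {K q d z} {rho : R} : (2 <= p)%N ->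
  is_convex K -> closed K -> K q -> outer_normal K q d -> K z ->
  0 < rho <= `|z - q| -> exists2 b, boundary K b & `|b - q| = rho.
Proof.
move=> p2 convK cK Kq [d0 normal_d] Kz /andP[rho0 rho_zq].
have zq0 : 0 < `|z - q| by apply: lt_le_trans rho_zq.
set lam := rho / `|z - q|.
have lam0 : 0 <= lam by rewrite divr_ge0 ?ltW.
have lam1 : lam <= 1 by rewrite ler_pdivrMr // mul1r.
apply: (@sphere_meets_boundary K q (lam *: (z - q)) (rho *: sgnv d)) => //.
- by rewrite normrZ ger0_norm // divfK // gt_eqF.
- by move=> k; rewrite mxE normrM normr_sign_vertex_entry mulr1 gtr0_norm.
- have -> : q + lam *: (z - q) = lam *: z + (1 - lam) *: q.
    by rewrite scalerBr scalerBl scale1r addrCA addrA.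
  exact: convK.
- move=> /normal_d; rewrite addrC addKr dotvZr dotv_sgnv.
  by rewrite leNgt pmulr_rgt0 // l1_norm_gt0.
Qed.

Lemma boundary_near_sphere {K u z} {rho eps : R} : (2 <= p)%N ->
  is_convex K -> compact K -> boundary K u -> K z -> 0 < eps -> 0 < rho ->
  rho + eps <= `|z - u| -> exists2 b, boundary K b & rho - eps <= `|b - u| <= rho + eps.
Proof.
move=> p2 convK cK Ku Kz eps0 rho0 zu.
have [q [d [Kq nd qu]]] := exists_outer_normal_near convK cK Ku eps0.
have rho_zq : 0 < rho <= `|z - q|.
  by rewrite rho0 /=; have := ler_distD q z u; lra.
have [b Kb bq] :=
  outer_normal_sphere_boundary p2 convK (compact_normed_closed cK) Kq nd Kz rho_zq.
exists b => //; have := ler_distD q b u; have := ler_distD u b q.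
by rewrite bq (distrC u q); lra.
Qed.

Lemma outer_normal_sgnv_notin {K q d x g} {s : R} : outer_normal K q d ->
  `|q - x| + `|g - (x + s *: sgnv d)| < s -> ~ K g.
Proof.
move=> [d0 normal_d] close /normal_d; apply/negP; rewrite -ltNge.
have dotv_ge y : - (l1_norm d * `|y|) <= dotv d y.
  by rewrite lerNl -dotvNr -normrN dotv_le_l1_norm.
have := dotv_ge (x - q); have := dotv_ge (g - (x + s *: sgnv d)).
have -> : g - q = (x - q) + s *: sgnv d + (g - (x + s *: sgnv d)).
  by apply/matrixP => i j; rewrite !mxE; ring.
rewrite !dotvDr dotvZr dotv_sgnv.
have : 0 < l1_norm d * (s - `|x - q| - `|g - (x + s *: sgnv d)|).
  by rewrite mulr_gt0 ?l1_norm_gt0 // (distrC x); lra.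
rewrite !mulrBr (mulrC s); lra.
Qed.

End OuterNormals.

Section PainleveKuratowski.
Context {R : realType} {p : nat}.
Implicit Types (A B : nat -> set 'rV[R]_p) (C : set 'rV[R]_p) (x y : 'rV[R]_p).

Definition PK_cluster A x := forall e, 0 < e ->
  forall N, exists2 n, (N <= n)%N & exists2 y, A n y & `|x - y| < e.

Lemma limsup_clusterP A x : PK_limsup A x <-> PK_cluster A x.
Proof.
split=> [[phi [u [phi_incr [Au /cvgrPdist_lt ux]]]] e e0 N | Ax].
  have [M _ uxM] := ux e e0.
  have phi_ge k : (k <= phi k)%N.
    by elim: k => // k IHk; apply: leq_ltn_trans IHk (phi_incr k).
  exists (phi (maxn M N)); first by apply: leq_trans (phi_ge _); rewrite leq_maxr.
  by exists (u (maxn M N)) => //; apply: uxM; rewrite /= leq_maxl.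
have pick_pt (kN : nat * nat) : exists ny : nat * 'rV[R]_p,
    [/\ (kN.2 <= ny.1)%N, A ny.1 ny.2 & `|x - ny.2| < kN.1.+1%:R^-1].
  case: kN => k N; have k0 : 0 < k.+1%:R^-1 :> R by rewrite invr_gt0.
  by have [n Nn [y Ay xy]] := Ax _ k0 N; exists (n, y).
have [g gP] := choice pick_pt.
(* [idx k] is the [k]-th extracted index together with its point. *)
pose fix idx k := if k is k'.+1 then g (k, (idx k').1.+1) else g (0, 0)%N.
have idxP k : A (idx k).1 (idx k).2 /\ `|x - (idx k).2| < k.+1%:R^-1.
  by case: k => [|k]; [have [] := gP (0, 0)%N | have [] := gP (k.+1, (idx k).1.+1)].
exists (fun k => (idx k).1), (fun k => (idx k).2); split; [|split].
- by move=> k; have [] := gP (k.+1, (idx k).1.+1).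
- by move=> k; case: (idxP k).
- apply/cvgrPdist_lt => e e0; near=> k; apply: lt_trans (idxP k).2 _.
  by near: k; exact: near_infty_natSinv_lt (PosNum e0).
Unshelve. all: by end_near.
Qed.

Lemma compact_meets_limsup A C : compact C ->
  (forall e, 0 < e -> forall N, exists2 n, (N <= n)%N &
     exists2 c, C c & exists2 y, A n y & `|c - y| < e) ->
  exists2 c, C c & PK_limsup A c.
Proof.
move=> cC CA.
pose B (eN : R * nat) := [set c | C c /\ exists2 n, (eN.2 <= n)%N &
  exists2 y, A n y & `|c - y| < eN.1].
pose D := [set eN : R * nat | 0 < eN.1].
have BF : Filter (filter_from D B).
  apply: filter_from_filter; first by exists (1, 0%N); rewrite /D /=.
  move=> [e1 N1] [e2 N2] /= e10 e20; exists (Num.min e1 e2, maxn N1 N2).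
    by rewrite /D /= lt_min e10 e20.
  move=> c [Cc [n]]; rewrite /= geq_max => /andP[N1n N2n] [y Ay].
  by rewrite lt_min => /andP[cy1 cy2]; split; split=> //; exists n => //; exists y.
have BPF : ProperFilter (filter_from D B).
  apply: filter_from_proper => -[e N] /= e0.
  have [n Nn [c Cc [y Ay cy]]] := CA e e0 N.
  by exists c; split => //; exists n => //; exists y.
have BC : filter_from D B C by exists (1, 0%N); [rewrite /D /= | move=> c []].
have [c [Cc clc]] := cC _ BPF BC.
exists c => //; apply/limsup_clusterP => e e0 N.
have e20 : 0 < e / 2 by rewrite divr_gt0.
have BN : filter_from D B (B (e / 2, N)) by exists (e / 2, N).
have [c' [[_ [n Nn [y Ay c'y]]] /ball_normP cc']] := clc _ _ BN (nbhsx_ballx c _ e20).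
exists n => //; exists y => //.
by apply: le_lt_trans (ler_distD c' _ _) _; rewrite /= in c'y; lra.
Qed.

Lemma closed_limsup A : closed (PK_limsup A).
Proof.
move=> x /closure_normP clx; apply/limsup_clusterP => e e0 N.
have e20 : 0 < e / 2 by rewrite divr_gt0.
have [x' /limsup_clusterP x'A xx'] := clx _ e20.
have [n Nn [y Ay x'y]] := x'A _ e20 N.
exists n => //; exists y => //.
by apply: le_lt_trans (ler_distD x' _ _) _; lra.
Qed.

Lemma liminf_sub_limsup A : PK_liminf A `<=` PK_limsup A.
Proof. by move=> x [u [Au ux]]; exists id, u. Qed.

Lemma liminf_eventually A x N : (forall n, A n !=set0) ->
  (forall n, (N <= n)%N -> A n x) -> PK_liminf A x.
Proof.
move=> A0 Ax; have [a aA] := choice A0.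
exists (fun n => if (N <= n)%N then x else a n); split.
  by move=> n; case: ifP => Nn; [apply: Ax | apply: aA].
by apply: cvg_near_cst; exists N => // n /= ->.
Qed.

Lemma conv_hull_liminf_sub A B : (forall n, A n `<=` B n) ->
  (forall n, is_convex (B n)) -> conv_hull (PK_liminf A) `<=` PK_liminf B.
Proof.
move=> AB convB x; apply.
  move=> y z t [u [Bu uy]] [v [Bv vz]] t0 t1.
  exists (fun n => t *: u n + (1 - t) *: v n); split; first by move=> n; apply: convB.
  by apply: cvgD; apply: cvgZl_tmp.
by move=> y [u [Au uy]]; exists u; split => // n; apply: AB.
Qed.

Lemma limsup_ray {A x v N} {M : R} : (forall n, closed (A n)) -> `|v| = 1 ->
  (forall n, (N <= n)%N -> forall z, A n z -> `|z| <= M) -> PK_limsup A x ->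
  exists2 s, 0 <= s & PK_limsup (fun n => boundary (A n)) (x + s *: v).
Proof.
move=> cA v1 A_bounded /limsup_clusterP Ax.
pose L := 2 * M + 1; pose ray (s : R) := x + s *: v.
have ray_cont : continuous ray.
  by move=> s; apply: cvgD; [exact: cvg_cst | exact: cvgZr_tmp].
pose S := ray @` [set s | 0 <= s <= L].
suff [_ [s /andP[s0 _] <-]] : exists2 c, S c & PK_limsup (fun n => boundary (A n)) c.
  by exists s.
apply: compact_meets_limsup.
  apply: continuous_compact; last exact: segment_compact.
  by apply: continuous_subspaceT => s; exact: ray_cont.
move=> e e0 N'; have [n] := Ax e e0 (maxn N' N).
rewrite geq_max => /andP[N'n Nn] [x' Ax' xx'].
have x'M := A_bounded n Nn _ Ax'.
have M0 : 0 <= M := le_trans (normr_ge0 _) x'M.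
have nAx'L : ~ A n (x' + L *: v).
  move=> /(A_bounded n Nn); have := ler_normB (x' + L *: v) x'.
  by rewrite addrAC subrr add0r normrZ v1 mulr1 ger0_norm /L; lra.
have [t /andP[t0 t1] [Kb nIb]] := segment_meets_boundary (cA n) Ax' nAx'L.
exists n => //; exists (ray (t * L)).
  by exists (t * L) => //; rewrite /= mulr_ge0 ?ler_piMl /L //=; lra.
exists (x' + t *: (x' + L *: v - x')); first exact/boundary_closedP.
have -> : ray (t * L) - (x' + t *: (x' + L *: v - x')) = x - x'.
  by apply/matrixP => i j; rewrite !mxE; ring.
exact: xx'.
Qed.

End PainleveKuratowski.

Section ConvergingBoundaries.
Context {R : realType} {p : nat} {E : nat -> set 'rV[R]_p} {F : set 'rV[R]_p}.
Hypotheses (convE : forall n, is_convex (E n)) (compactE : forall n, compact (E n)).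
Hypotheses (liminfF : PK_liminf (fun n => boundary (E n)) = F)
  (limsupF : PK_limsup (fun n => boundary (E n)) = F).

Lemma closed_En n : closed (E n).
Proof. exact: compact_normed_closed. Qed.

Lemma boundary_sub_En n : boundary (E n) `<=` E n.
Proof. by move=> x /(boundary_closedP (closed_En n)) []. Qed.

Lemma En_neq0 n : F !=set0 -> E n !=set0.
Proof.
move=> [y]; rewrite -liminfF => -[u [Fu _]].
by exists (u n); exact: boundary_sub_En.
Qed.

Lemma eventually_bounded : (2 <= p)%N -> compact F -> F !=set0 ->
  exists N (M : R), forall n, (N <= n)%N -> forall z, E n z -> `|z| <= M.
Proof.
move=> p2 cF [y Fy].
have [M M0 FM] := ex_strict_bound_gt0 (compact_bounded cF).
have {}FM x : F x -> `|x| < M by exact: FM.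
apply: contrapT => unbounded.
have far N : exists2 n, (N <= n)%N & exists2 z, E n z & 3 * M + 5 < `|z|.
  apply: contrapT => near; apply: unbounded; exists N, (3 * M + 5) => n Nn z Ez.
  by rewrite leNgt; apply/negP => Mz; apply: near; exists n => //; exists z.
have [u [Fu uy]] : PK_liminf (fun n => boundary (E n)) y by rewrite liminfF.
have [N0 _ uyN0] := (cvgrPdist_lt _ _).1 uy _ ltr01.
have [c /andP[Mc _]] : exists2 c, M + 1 <= `|c| <= 3 * M + 5 &
    PK_limsup (fun n => boundary (E n)) c.
  apply: compact_meets_limsup; first exact: compact_annulus.
  move=> e e0 N; have [n] := far (maxn N N0).
  rewrite geq_max => /andP[Nn N0n] [z Ez Mz].
  have un_lt : `|u n| < M + 1.
    have := lerB_dist (u n) y; rewrite distrC.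
    by have := FM y Fy; have := uyN0 n N0n; lra.
  have rho0 : 0 < 2 * M + 3 by lra.
  have zu : 2 * M + 3 + 1 <= `|z - u n| by have := lerB_dist z (u n); lra.
  have [b Eb /andP[bu1 bu2]] :=
    boundary_near_sphere p2 (convE n) (compactE n) (Fu n) Ez ltr01 rho0 zu.
  exists n => //; exists b; last by exists b; rewrite ?subrr ?normr0.
  have := ler_normB b (u n); have := lerB_dist b (u n).
  by move=> b_le b_ge; apply/andP; split; lra.
by rewrite limsupF => /FM; lra.
Qed.

Lemma conv_hull_sub_liminf : conv_hull F `<=` PK_liminf E.
Proof. by rewrite -{1}liminfF; apply: conv_hull_liminf_sub; [exact: boundary_sub_En|]. Qed.

Lemma limsup_sub_conv_hull {N} {M : R} : (0 < p)%N ->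
  (forall n, (N <= n)%N -> forall z, E n z -> `|z| <= M) ->
  PK_limsup E `<=` conv_hull F.
Proof.
move=> p0 E_bounded x Ex C convC FC.
pose e : 'rV[R]_p := const_mx 1.
have e1 : `|e| = 1.
  apply/eqP; rewrite eq_le normr_le_entries => [|//|k]; last by rewrite mxE normr1.
  by have := entry_le_normr e (Ordinal p0); rewrite mxE normr1.
have [s1 s10] := limsup_ray closed_En e1 E_bounded Ex.
rewrite limsupF => /FC Cx1.
have [s2 s20] := limsup_ray closed_En (etrans (normrN e) e1) E_bounded Ex.
rewrite limsupF => /FC Cx2.
have [s_eq0|s_neq0] := eqVneq (s1 + s2) 0.
  by have -> : x = x + s1 *: e by rewrite (_ : s1 = 0) ?scale0r ?addr0 //; lra.
have s_gt0 : 0 < s1 + s2 by rewrite lt_neqAle eq_sym s_neq0 addr_ge0.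
have := convC _ _ (s2 / (s1 + s2)) Cx1 Cx2.
have -> : s2 / (s1 + s2) *: (x + s1 *: e) + (1 - s2 / (s1 + s2)) *: (x + s2 *: - e) = x.
  by apply/matrixP => i j; rewrite !mxE; field.
by apply; [rewrite divr_ge0 // ltW | rewrite ler_pdivrMr // mul1r lerDr].
Qed.

Lemma PK_converges_conv_hull : (2 <= p)%N -> compact F -> F !=set0 ->
  PK_converges E (conv_hull F).
Proof.
move=> p2 cF F0; have [N [M E_bounded]] := eventually_bounded p2 cF F0.
have limsup_sub := limsup_sub_conv_hull (ltnW p2) E_bounded.
split; apply/seteqP; split=> x.
- by move/liminf_sub_limsup; exact: limsup_sub.
- exact: conv_hull_sub_liminf.
- exact: limsup_sub.
- by move/conv_hull_sub_liminf; exact: liminf_sub_limsup.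
Qed.

Section ConvHullLimit.
Hypotheses (liminfE : PK_liminf E = conv_hull F) (limsupE : PK_limsup E = conv_hull F).

Lemma closed_conv_hull : closed (conv_hull F).
Proof. by rewrite -limsupE; exact: closed_limsup. Qed.

Lemma boundary_conv_hull_sub : F !=set0 -> boundary (conv_hull F) `<=` F.
Proof.
move=> F0 x /(boundary_closedP closed_conv_hull) [Hx nIx].
rewrite -limsupF; apply/limsup_clusterP => e e0 N.
have e20 : 0 < e / 2 by rewrite divr_gt0.
have [w xw nHw] := not_interior_near_compl nIx e20.
have [v [Ev vx]] : PK_liminf E x by rewrite liminfE.
have [N1 _ vxN1] := (cvgrPdist_lt _ _).1 vx _ e20.
have [n Nn nEw] : exists2 n, (maxn N N1 <= n)%N & ~ E n w.
  apply: contrapT => H; apply: nHw; rewrite -liminfE.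
  apply: (@liminf_eventually _ _ _ _ (maxn N N1)) => [n|n Nn]; first exact: En_neq0.
  by apply: contrapT => nEnw; apply: H; exists n.
move: Nn; rewrite geq_max => /andP[Nn N1n].
have [t t01 [Eb nIb]] := segment_meets_boundary (closed_En n) (Ev n) nEw.
exists n => //; exists (v n + t *: (w - v n)); first exact/(boundary_closedP (closed_En n)).
have -> : x - (v n + t *: (w - v n)) = (x - v n) + t *: ((x - w) - (x - v n)).
  by apply/matrixP => i j; rewrite !mxE; ring.
have := vxN1 n N1n; rewrite /= => xvn.
apply: le_lt_trans (normr_segment_le t01 (ltW xvn) (ltW xw)) _; lra.
Qed.

Lemma sub_boundary_conv_hull : F `<=` boundary (conv_hull F).
Proof.
move=> x Fx; apply/(boundary_closedP closed_conv_hull); split.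
  by move=> C _; apply.
move=> /interior_normP [r r0 Hr].
have vertex_liminf s : PK_liminf E (x + (r / 2) *: sign_vertex s).
  rewrite liminfE; apply: Hr; rewrite opprD addrA subrr add0r normrN normrZ.
  rewrite gtr0_norm ?divr_gt0 //; apply: le_lt_trans (ler_wpM2l _ (normr_sign_vertex_le s)) _.
    by rewrite divr_ge0 ?ltW.
  by rewrite mulr1; lra.
have [g gP] := choice vertex_liminf.
have [u [Fu ux]] : PK_liminf (fun n => boundary (E n)) x by rewrite liminfF.
have del0 : 0 < r / 6 by rewrite divr_gt0.
have [N1 _ gN1] : \forall n \near \oo,
    forall s, `|x + (r / 2) *: sign_vertex s - g s n| < r / 6.
  by apply: filter_forall => s; exact: (cvgrPdist_lt _ _).1 (gP s).2 _ del0.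
have [N2 _ uN2] := (cvgrPdist_lt _ _).1 ux _ del0.
pose n := maxn N1 N2.
have [q [d [Eq nd qu]]] := exists_outer_normal_near (convE n) (compactE n) (Fu n) del0.
pose s0 : {ffun 'I_p -> bool} := [ffun i => 0 <= d ord0 i].
apply: (outer_normal_sgnv_notin (x := x) (s := r / 2) nd _ ((gP s0).1 n)).
have qx := ler_distD (u n) q x; have gn := gN1 n (leq_maxl _ _) s0.
have xu : `|u n - x| < r / 6 by rewrite distrC; exact: uN2 (leq_maxr _ _).
by rewrite distrC in gn; lra.
Qed.

End ConvHullLimit.

End ConvergingBoundaries.

Theorem mainTheorem9 (R : realType) (p : nat) (E : nat -> set 'rV[R]_p)
  (F : set 'rV[R]_p) :
  (2 <= p)%N ->
  (forall n, is_convex (E n) /\ compact (E n)) ->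
  compact F -> F !=set0 ->
  PK_converges (fun n => boundary (E n)) F ->
  PK_converges E (conv_hull F) /\ boundary (conv_hull F) = F.
Proof.
move=> p2 convcompE cF F0 [liminfF limsupF].
have convE n := (convcompE n).1; have compactE n := (convcompE n).2.
have EH := PK_converges_conv_hull convE compactE liminfF limsupF p2 cF F0.
split=> //; have [liminfE limsupE] := EH.
apply/seteqP; split.
- exact: boundary_conv_hull_sub.
- exact: sub_boundary_conv_hull.
Qed.
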